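(* In the setting described in the context, for every $\theta\in\Theta$ one has $H_\theta\le C_\Upsilon(\theta)$, with equality if and only if $\langle w_j'(\theta)|w_k(\theta)\rangle=0$ for all $j,k$ (including $j=k$) with $p_j(\theta)>0$ and $p_k(\theta)>0$.
   Context: Let $\Theta\subseteq\mathbb{R}$ be an open interval and $D\ge1$. For $\theta\in\Theta$ let $\Phi_\theta$ be a quantum channel on $D\times D$ complex matrices and $\rho_0=|\psi_0\rangle\langle\psi_0|$ a fixed pure input state. Canonical Kraus operators are $D\times D$ matrices $\Upsilon_1(\theta),\dots,\Upsilon_D(\theta)$, differentiable in $\theta$, with $\sum_k\Upsilon_k^\dagger\Upsilon_k=\mathbb{I}$, $\Phi_\theta(\rho)=\sum_k\Upsilon_k\rho\Upsilon_k^\dagger$, and $\mathrm{tr}\{\Upsilon_k\rho_0\Upsilon_j^\dagger\}=\delta_{jk}p_k(\theta)$. Write $\Upsilon_k(\theta)|\psi_0\rangle=\sqrt{p_k(\theta)}|w_k(\theta)\rangle$ with $\{|w_k(\theta)\rangle\}$ an orthonormal basis of $\mathbb{C}^D$ differentiable in $\theta$, so the output is $\rho_\theta=\sum_kp_k|w_k\rangle\langle w_k|$. Each $p_k$ is assumed either identically zero or strictly positive on $\Theta$. Primes denote $d/d\theta$. $C_\Upsilon(\theta)=4\sum_k\mathrm{tr}\{\Upsilon_k'\rho_0\Upsilon_k'^\dagger\}$. $H_\theta=\mathrm{tr}\{\rho_\theta\lambda^2\}$ is the SLD quantum information of $\rho_\theta$, $\lambda$ any Hermitian solution of $d\rho_\theta/d\theta=\frac12(\rho_\theta\lambda+\lambda\rho_\theta)$.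 *)

From Stdlib Require Import Reals.
From HB Require Import structures.
From mathcomp Require Import all_boot all_order all_algebra.
From mathcomp Require Import complex Rstruct.

Set Implicit Arguments.
Unset Strict Implicit.
Unset Printing Implicit Defensive.

Import Order.TTheory GRing.Theory Num.Theory.
Local Open Scope ring_scope.

Notation Cplx := (R[i]).

Definition adj (m n : nat) (A : 'M[Cplx]_(m, n)) : 'M[Cplx]_(n, m) :=
  (map_mx Num.conj A)^T.

Definition braket (n : nat) (a b : 'cV[Cplx]_n) : Cplx := (adj a *m b) ord0 ord0.

Definition ketbra (n : nat) (a b : 'cV[Cplx]_n) : 'M[Cplx]_n := a *m adj b.

Definition hermitian (n : nat) (A : 'M[Cplx]_n) : Prop := adj A = A.

Definition Theta_open_interval (Th : R -> Prop) : Prop :=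
  (exists x, Th x) /\
  (forall x y z : R, Th x -> Th z -> (x <= y)%R -> (y <= z)%R -> Th y) /\
  (forall x, Th x -> exists e : R, (0 < e)%R /\
     forall y, (Rabs (y - x) < e)%R -> Th y).

Definition cderiv_at (f : R -> Cplx) (f' : Cplx) (t : R) : Prop :=
  derivable_pt_lim (fun s => complex.Re (f s)) t (complex.Re f') /\
  derivable_pt_lim (fun s => complex.Im (f s)) t (complex.Im f').

Definition mderiv_at (m n : nat) (F : R -> 'M[Cplx]_(m, n)) (F' : 'M[Cplx]_(m, n))
    (t : R) : Prop :=
  forall i j, cderiv_at (fun s => F s i j) (F' i j) t.

Definition is_SLD (n : nat) (rho drho lam : 'M[Cplx]_n) : Prop :=
  hermitian lam /\ drho = 2^-1 *: (rho *m lam + lam *m rho).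

Definition SLD_info (n : nat) (rho lam : 'M[Cplx]_n) : Cplx := \tr (rho *m lam *m lam).

Definition cR (x : R) : Cplx := Complex x 0.

From Stdlib Require Import Reals.
From HB Require Import structures.
From mathcomp Require Import all_boot all_order all_algebra.
From mathcomp Require Import complex Rstruct.
From mathcomp Require Import ring lra.
Import Order.TTheory GRing.Theory Num.Theory.
Local Open Scope ring_scope.

Set Implicit Arguments.
Unset Strict Implicit.
Unset Printing Implicit Defensive.

(* With u_k = Υ_k ψ0 = √p_k w_k and v_k = Υ_k' ψ0 one has ρ = Σ u_k u_k^†,
   ρ' = Σ (v_k u_k^† + u_k v_k^†) and C_Υ = 4 Σ ‖v_k‖².  Pairing the SLD
   equation with λ gives H = tr(λ ρ') = Σ 2 Re ⟨λu_k|v_k⟩, while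
   H = Σ ‖λu_k‖²; hence C_Υ - H = Σ ‖λu_k - 2 v_k‖², and equality means
   λu_k = 2 v_k for all k.  Differentiating ⟨w_j|w_k⟩ = δ_jk and
   ⟨u_j|w_k⟩ = √p_j δ_jk yields ⟨v_j|u_k⟩ - ⟨u_j|v_k⟩ = 2 √(p_j p_k) ⟨w_j'|w_k⟩.
   Hermiticity of λ turns λu = 2v into the vanishing of these overlaps;
   conversely, when they vanish, pairing the SLD equation with w_j forces
   ⟨w_j|λu_k⟩ = 2 ⟨w_j|v_k⟩. *)

Lemma ReD (x y : Cplx) : complex.Re (x + y) = complex.Re x + complex.Re y.
Proof. by case: x; case: y. Qed.

Lemma ImD (x y : Cplx) : complex.Im (x + y) = complex.Im x + complex.Im y.
Proof. by case: x; case: y. Qed.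

Lemma ReM (x y : Cplx) :
  complex.Re (x * y) = complex.Re x * complex.Re y - complex.Im x * complex.Im y.
Proof. by case: x; case: y. Qed.

Lemma ImM (x y : Cplx) :
  complex.Im (x * y) = complex.Re x * complex.Im y + complex.Im x * complex.Re y.
Proof. by case: x; case: y. Qed.

Lemma ReJ (x : Cplx) : complex.Re x^* = complex.Re x.
Proof. by case: x. Qed.

Lemma ImJ (x : Cplx) : complex.Im x^* = - complex.Im x.
Proof. by case: x. Qed.

Lemma cplx_ext (x y : Cplx) :
  complex.Re x = complex.Re y -> complex.Im x = complex.Im y -> x = y.
Proof. by case: x => a b; case: y => c d /= -> ->. Qed.

Lemma conj_cR x : (cR x)^* = cR x.
Proof. by apply: cplx_ext; rewrite ?ReJ ?ImJ /= ?oppr0. Qed.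

Lemma cRD x y : cR x + cR y = cR (x + y).
Proof. by apply: cplx_ext; rewrite ?ReD ?ImD /= ?addr0. Qed.

Lemma cRM x y : cR x * cR y = cR (x * y).
Proof. by apply: cplx_ext; rewrite ?ReM ?ImM /= ?mulr0 ?mul0r ?subr0 ?addr0. Qed.

Lemma cR0 : cR 0 = 0.
Proof. by []. Qed.

Lemma cR_eq0 x : (cR x == 0) = (x == 0).
Proof. by apply/eqP/eqP => [[]|->]. Qed.

Lemma cR_sqrt x : 0 <= x -> cR (Num.sqrt x) * cR (Num.sqrt x) = cR x.
Proof.
by move=> x_ge0; rewrite cRM; congr cR; exact: etrans (esym (expr2 _)) (sqr_sqrtr x_ge0).
Qed.

Lemma cR_Re_Im0 (x : Cplx) : complex.Im x = 0 -> x = cR (complex.Re x).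
Proof. by case: x => a b /= ->. Qed.

(** * Derivatives of complex and matrix valued functions *)

Lemma derivable_pt_lim_congr (f g : R -> R) t l l' :
  derivable_pt_lim f t l -> (forall s, f s = g s) -> l = l' ->
  derivable_pt_lim g t l'.
Proof. by move=> df fg <-; apply: derivable_pt_lim_ext fg df. Qed.

Lemma cderiv_ext (f g : R -> Cplx) f' t :
  (forall s, f s = g s) -> cderiv_at f f' t -> cderiv_at g f' t.
Proof.
move=> fg [dRe dIm]; split.
- by apply: (derivable_pt_lim_congr dRe) => // s; rewrite fg.
- by apply: (derivable_pt_lim_congr dIm) => // s; rewrite fg.
Qed.

Lemma cderiv_const (c : Cplx) t : cderiv_at (fun=> c) 0 t.
Proof. by split; apply: derivable_pt_lim_const. Qed.

Lemma cderiv_add (f g : R -> Cplx) f' g' t :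
  cderiv_at f f' t -> cderiv_at g g' t ->
  cderiv_at (fun s => f s + g s) (f' + g') t.
Proof.
move=> [df1 df2] [dg1 dg2]; split.
- by apply: (derivable_pt_lim_congr (derivable_pt_lim_plus _ _ _ _ _ df1 dg1))
    => [s|]; rewrite ReD.
- by apply: (derivable_pt_lim_congr (derivable_pt_lim_plus _ _ _ _ _ df2 dg2))
    => [s|]; rewrite ImD.
Qed.

Lemma cderiv_mul (f g : R -> Cplx) f' g' t :
  cderiv_at f f' t -> cderiv_at g g' t ->
  cderiv_at (fun s => f s * g s) (f' * g t + f t * g') t.
Proof.
move=> [df1 df2] [dg1 dg2]; split.
- apply: (derivable_pt_lim_congr (derivable_pt_lim_minus _ _ _ _ _
    (derivable_pt_lim_mult _ _ _ _ _ df1 dg1)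
    (derivable_pt_lim_mult _ _ _ _ _ df2 dg2))) => [s|]; first by rewrite ReM.
  by rewrite ReD !ReM /= !RealsE; ring.
- apply: (derivable_pt_lim_congr (derivable_pt_lim_plus _ _ _ _ _
    (derivable_pt_lim_mult _ _ _ _ _ df1 dg2)
    (derivable_pt_lim_mult _ _ _ _ _ df2 dg1))) => [s|]; first by rewrite ImM.
  by rewrite ImD !ImM /= !RealsE; ring.
Qed.

Lemma cderiv_conj (f : R -> Cplx) f' t :
  cderiv_at f f' t -> cderiv_at (fun s => (f s)^*) f'^* t.
Proof.
move=> [df1 df2]; split.
- by apply: (derivable_pt_lim_congr df1) => [s|]; rewrite ReJ.
- by apply: (derivable_pt_lim_congr (derivable_pt_lim_opp _ _ _ df2)) => [s|];
    rewrite ImJ.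
Qed.

Lemma cderiv_sum (I : Type) (r : seq I) (F : I -> R -> Cplx) (F' : I -> Cplx) t :
  (forall i, cderiv_at (F i) (F' i) t) ->
  cderiv_at (fun s => \sum_(i <- r) F i s) (\sum_(i <- r) F' i) t.
Proof.
move=> dF; elim: r => [|i r IHr].
  by rewrite big_nil; apply: (cderiv_ext _ (cderiv_const 0 t)) => s; rewrite big_nil.
rewrite big_cons; apply: (cderiv_ext _ (cderiv_add (dF i) IHr)) => s.
by rewrite big_cons.
Qed.

Lemma mderiv_mul m n q (A : R -> 'M[Cplx]_(m, n)) (B : R -> 'M[Cplx]_(n, q)) A' B' t :
  mderiv_at A A' t -> mderiv_at B B' t ->
  mderiv_at (fun s => A s *m B s) (A' *m B t + A t *m B') t.
Proof.
move=> dA dB i j; rewrite !mxE -big_split /=.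
apply: (@cderiv_ext (fun s => \sum_k A s i k * B s k j)) => [s|]; first by rewrite mxE.
by apply: cderiv_sum => k; apply: cderiv_mul.
Qed.

Lemma mderiv_const m n (C : 'M[Cplx]_(m, n)) t : mderiv_at (fun=> C) 0 t.
Proof. by move=> i j; rewrite mxE; apply: cderiv_const. Qed.

Lemma mderiv_mulmxr m n q (A : R -> 'M[Cplx]_(m, n)) (B : 'M[Cplx]_(n, q)) A' t :
  mderiv_at A A' t -> mderiv_at (fun s => A s *m B) (A' *m B) t.
Proof.
by move=> dA; have := mderiv_mul dA (mderiv_const B t); rewrite mulmx0 addr0.
Qed.

Lemma mderiv_adj m n (A : R -> 'M[Cplx]_(m, n)) A' t :
  mderiv_at A A' t -> mderiv_at (fun s => adj (A s)) (adj A') t.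
Proof.
move=> dA i j; rewrite !mxE.
apply: (@cderiv_ext (fun s => (A s j i)^*)) => [s|]; first by rewrite !mxE.
exact: cderiv_conj.
Qed.

Lemma mderiv_sum m n (I : Type) (r : seq I) (F : I -> R -> 'M[Cplx]_(m, n)) F' t :
  (forall k, mderiv_at (F k) (F' k) t) ->
  mderiv_at (fun s => \sum_(k <- r) F k s) (\sum_(k <- r) F' k) t.
Proof.
move=> dF i j; rewrite summxE.
apply: (@cderiv_ext (fun s => \sum_(k <- r) F k s i j)) => [s|]; first by rewrite summxE.
by apply: cderiv_sum => k; apply: dF.
Qed.

Lemma cderiv_braket n (a b : R -> 'cV[Cplx]_n) a' b' t :
  mderiv_at a a' t -> mderiv_at b b' t ->
  cderiv_at (fun s => braket (a s) (b s)) (braket a' (b t) + braket (a t) b') t.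
Proof. by move=> da db; have := mderiv_mul (mderiv_adj da) db ord0 ord0; rewrite mxE. Qed.

Section OpenInterval.
Variables (Th : R -> Prop) (t : R).
Hypotheses (Th_open : Theta_open_interval Th) (Th_t : Th t).

Lemma derivable_pt_lim_loc_unique (f g : R -> R) l1 l2 :
  (forall s, Th s -> f s = g s) ->
  derivable_pt_lim f t l1 -> derivable_pt_lim g t l2 -> l1 = l2.
Proof.
move=> fg df dg; case: Th_open => _ [_ Th_nbhd].
have [e [e_gt0 ball_Th]] := Th_nbhd t Th_t.
apply: (uniqueness_limite g t) dg.
apply: (derivable_pt_lim_locally_ext f g t (t - e) (t + e)) df.
  by split; apply/RltP; rewrite ?RminusE ?RplusE; lra.
move=> s [/RltP lt_s /RltP s_lt]; apply: fg; apply: ball_Th; apply/RltP.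
by apply: Rabs_def1; apply/RltP; rewrite ?RminusE ?RplusE ?RoppE in lt_s s_lt *; lra.
Qed.

Lemma cderiv_loc_unique (f g : R -> Cplx) l1 l2 :
  (forall s, Th s -> f s = g s) -> cderiv_at f l1 t -> cderiv_at g l2 t -> l1 = l2.
Proof.
move=> fg [df1 df2] [dg1 dg2]; apply: cplx_ext.
- by apply: (derivable_pt_lim_loc_unique _ df1 dg1) => s Th_s; rewrite fg.
- by apply: (derivable_pt_lim_loc_unique _ df2 dg2) => s Th_s; rewrite fg.
Qed.

Lemma cderiv_loc_const (f : R -> Cplx) c l :
  (forall s, Th s -> f s = c) -> cderiv_at f l t -> l = 0.
Proof. by move=> fc df; apply: (cderiv_loc_unique fc df); apply: cderiv_const. Qed.

Lemma cderiv_loc_real (f : R -> Cplx) (g : R -> R) l :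
  (forall s, Th s -> f s = cR (g s)) -> cderiv_at f l t -> l = cR (complex.Re l).
Proof.
move=> fg [_ df]; apply: cR_Re_Im0.
apply: (derivable_pt_lim_loc_unique _ df (derivable_pt_lim_const 0 t)).
by move=> s Th_s; rewrite fg.
Qed.

Lemma mderiv_loc_unique m n (F G : R -> 'M[Cplx]_(m, n)) F' G' :
  (forall s, Th s -> F s = G s) -> mderiv_at F F' t -> mderiv_at G G' t -> F' = G'.
Proof.
move=> FG dF dG; apply/matrixP => i j.
by apply: (cderiv_loc_unique _ (dF i j) (dG i j)) => s Th_s; rewrite FG.
Qed.

Lemma mderiv_sum_ketbra D (F : 'I_D -> R -> 'cV[Cplx]_D) F' rho drho :
  (forall k, mderiv_at (F k) (F' k) t) ->
  (forall s, Th s -> rho s = \sum_k F k s *m adj (F k s)) ->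
  mderiv_at rho drho t ->
  drho = \sum_k (F' k *m adj (F k t) + F k t *m adj (F' k)).
Proof.
move=> dF rho_F drho_rho; apply: (mderiv_loc_unique rho_F drho_rho).
by apply: mderiv_sum => k; apply: mderiv_mul (dF k) (mderiv_adj (dF k)).
Qed.

End OpenInterval.

(** * Adjoints and inner products *)

Lemma adjE m n (A : 'M[Cplx]_(m, n)) i j : adj A i j = (A j i)^*.
Proof. by rewrite !mxE. Qed.

Lemma adjM m n q (A : 'M[Cplx]_(m, n)) (B : 'M[Cplx]_(n, q)) :
  adj (A *m B) = adj B *m adj A.
Proof.
apply/matrixP => i j; rewrite !mxE rmorph_sum; apply: eq_bigr => k _.
by rewrite !mxE rmorphM mulrC.
Qed.

Lemma adjK m n (A : 'M[Cplx]_(m, n)) : adj (adj A) = A.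
Proof. by apply/matrixP => i j; rewrite !adjE conjCK. Qed.

Lemma adjB m n (A B : 'M[Cplx]_(m, n)) : adj (A - B) = adj A - adj B.
Proof. by apply/matrixP => i j; rewrite !mxE rmorphB. Qed.

Lemma adjZ m n c (A : 'M[Cplx]_(m, n)) : adj (c *: A) = c^* *: adj A.
Proof. by apply/matrixP => i j; rewrite !mxE rmorphM. Qed.

Lemma braketE n (a b : 'cV[Cplx]_n) : braket a b = \sum_i (a i 0)^* * b i 0.
Proof. by rewrite /braket mxE; apply: eq_bigr => i _; rewrite adjE. Qed.

Lemma braketJ n (a b : 'cV[Cplx]_n) : (braket a b)^* = braket b a.
Proof.
rewrite !braketE rmorph_sum; apply: eq_bigr => i _.
by rewrite rmorphM /= conjCK mulrC.
Qed.

Lemma braketDr n (a b c : 'cV[Cplx]_n) : braket a (b + c) = braket a b + braket a c.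
Proof. by rewrite /braket mulmxDr mxE. Qed.

Lemma braketBr n (a b c : 'cV[Cplx]_n) : braket a (b - c) = braket a b - braket a c.
Proof. by rewrite /braket mulmxBr !mxE. Qed.

Lemma braketBl n (a b c : 'cV[Cplx]_n) : braket (a - b) c = braket a c - braket b c.
Proof. by rewrite /braket adjB mulmxBl !mxE. Qed.

Lemma braketZr n (a b : 'cV[Cplx]_n) c : braket a (c *: b) = c * braket a b.
Proof. by rewrite /braket -scalemxAr mxE. Qed.

Lemma braketZl n (a b : 'cV[Cplx]_n) c : braket (c *: a) b = c^* * braket a b.
Proof. by rewrite /braket adjZ -scalemxAl mxE. Qed.

Lemma braket_sumr n (I : Type) (r : seq I) (a : 'cV[Cplx]_n) (F : I -> 'cV[Cplx]_n) :
  braket a (\sum_(i <- r) F i) = \sum_(i <- r) braket a (F i).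
Proof. by rewrite /braket mulmx_sumr summxE. Qed.

Lemma braket_mulmxr n (a b : 'cV[Cplx]_n) (M : 'M[Cplx]_n) :
  braket a (M *m b) = braket (adj M *m a) b.
Proof. by rewrite /braket adjM adjK mulmxA. Qed.

Lemma adj_mulmx_braket n (a b : 'cV[Cplx]_n) : adj a *m b = (braket a b)%:M.
Proof. by apply/matrixP => i j; rewrite (ord1 i) (ord1 j) [RHS]mxE mulr1n. Qed.

Lemma braket_ketbra n (a b c d : 'cV[Cplx]_n) :
  braket a (b *m adj c *m d) = braket a b * braket c d.
Proof.
by rewrite -mulmxA adj_mulmx_braket mul_mx_scalar braketZr mulrC.
Qed.

Lemma mxtrace_sum n (I : Type) (r : seq I) (F : I -> 'M[Cplx]_n) :
  \tr (\sum_(i <- r) F i) = \sum_(i <- r) \tr (F i).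
Proof. exact: raddf_sum. Qed.

Lemma mxtrace_ketbra n (a b : 'cV[Cplx]_n) : \tr (a *m adj b) = braket b a.
Proof. by rewrite mxtrace_mulC trace_mx11. Qed.

Lemma mxtrace_conj_ketbra n (A : 'M[Cplx]_n) (x : 'cV[Cplx]_n) :
  \tr (A *m ketbra x x *m adj A) = braket (A *m x) (A *m x).
Proof. by rewrite -mxtrace_ketbra adjM /ketbra !mulmxA. Qed.

Lemma braket_self_ge0 n (a : 'cV[Cplx]_n) : 0 <= braket a a.
Proof. by rewrite braketE; apply: sumr_ge0 => i _; rewrite mulrC mul_conjC_ge0. Qed.

Lemma sum_braket_self_eq0 (I : finType) n (x : I -> 'cV[Cplx]_n) :
  \sum_k braket (x k) (x k) = 0 <-> forall k, x k = 0.
Proof.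
split=> [sum_eq0 k|x_eq0]; last by rewrite big1 // => k _; rewrite x_eq0 /braket mulmx0 mxE.
have := @psumr_eq0P _ _ _ _ (fun k _ => braket_self_ge0 (x k)) sum_eq0 k isT.
rewrite braketE => /psumr_eq0P xk_eq0; apply/matrixP => i j; rewrite (ord1 j) mxE.
apply/eqP; rewrite -mul_conjC_eq0 mulrC; apply/eqP/xk_eq0 => // l _.
by rewrite mulrC mul_conjC_ge0.
Qed.

Lemma orthonormal_eq0 n (W : 'I_n -> 'cV[Cplx]_n) (x : 'cV[Cplx]_n) :
  (forall j k, braket (W j) (W k) = (j == k)%:R) ->
  (forall j, braket (W j) x = 0) -> x = 0.
Proof.
move=> W_orthonormal Wx_eq0; pose M := \matrix_(i, j) W j i 0.
have MM : adj M *m M = 1%:M.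
  apply/matrixP => j k; rewrite [RHS]mxE -W_orthonormal braketE mxE.
  by apply: eq_bigr => i _; rewrite adjE !mxE.
have Mx : adj M *m x = 0.
  apply/matrixP => j i; rewrite (ord1 i) [RHS]mxE -(Wx_eq0 j) braketE mxE.
  by apply: eq_bigr => l _; rewrite adjE !mxE.
by rewrite -(mul1mx x) -(mulmx1C MM) -mulmxA Mx mulmx0.
Qed.

(** * The SLD information bound *)

Section SLDInformationBound.
Variables (D : nat) (p : 'I_D -> R) (W v : 'I_D -> 'cV[Cplx]_D).
Variables (lam drho : 'M[Cplx]_D).

Local Notation sq k := (cR (Num.sqrt (p k))).
Local Notation u k := (sq k *: W k).
Local Notation rho := (\sum_k cR (p k) *: ketbra (W k) (W k)).

Hypothesis p_ge0 : forall k, 0 <= p k.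
Hypothesis lam_SLD : is_SLD rho drho lam.
Hypothesis drho_sum : drho = \sum_k (v k *m adj (u k) + u k *m adj (v k)).

Lemma rho_sum_ketbra : rho = \sum_k u k *m adj (u k).
Proof.
apply: eq_bigr => k _.
by rewrite adjZ conj_cR -scalemxAl -scalemxAr scalerA cR_sqrt.
Qed.

Lemma SLD_info_defect :
  4 * \sum_k braket (v k) (v k) - SLD_info rho lam =
  \sum_k braket (lam *m u k - 2%:R *: v k) (lam *m u k - 2%:R *: v k).
Proof.
case: lam_SLD => lam_herm drho_SLD.
have info_sum : SLD_info rho lam = \sum_k braket (lam *m u k) (lam *m u k).
  rewrite /SLD_info rho_sum_ketbra !mulmx_suml mxtrace_sum; apply: eq_bigr => k _.
  by rewrite mxtrace_mulC !mulmxA -mxtrace_ketbra adjM lam_herm !mulmxA.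
have trace_sum : \tr (lam *m drho) =
    \sum_k (braket (lam *m u k) (v k) + braket (v k) (lam *m u k)).
  rewrite drho_sum mulmx_sumr mxtrace_sum; apply: eq_bigr => k _.
  by rewrite mulmxDr mxtraceD !mulmxA !mxtrace_ketbra braket_mulmxr lam_herm.
have trace_info : \tr (lam *m drho) = SLD_info rho lam.
  rewrite drho_SLD -scalemxAr mxtraceZ mulmxDr mxtraceD /SLD_info.
  have -> : \tr (lam *m (lam *m rho)) = \tr (rho *m lam *m lam).
    by rewrite mulmxA mxtrace_mulC mulmxA.
  by rewrite mxtrace_mulC; field.
have expand k :
    braket (lam *m u k - 2%:R *: v k) (lam *m u k - 2%:R *: v k) =
    braket (lam *m u k) (lam *m u k)
    - 2%:R * (braket (lam *m u k) (v k) + braket (v k) (lam *m u k))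
    + 4 * braket (v k) (v k).
  by rewrite !braketBl !braketBr !braketZl !braketZr rmorph_nat; ring.
rewrite [RHS](eq_bigr _ (fun k _ => expand k)) big_split sumrB /= -!mulr_sumr.
by rewrite -info_sum -trace_sum trace_info; ring.
Qed.

Lemma SLD_info_bound :
  SLD_info rho lam <= 4 * \sum_k braket (v k) (v k) /\
  (SLD_info rho lam = 4 * \sum_k braket (v k) (v k) <->
   forall k, lam *m u k = 2%:R *: v k).
Proof.
split; first by rewrite -subr_ge0 SLD_info_defect sumr_ge0 // => k _; exact: braket_self_ge0.
split=> [info_eq k | lam_u].
  apply/eqP; rewrite -subr_eq0; apply/eqP; move: k; apply/sum_braket_self_eq0.
  by rewrite -SLD_info_defect info_eq subrr.
apply/eqP; rewrite eq_sym -subr_eq0 SLD_info_defect; apply/eqP/sum_braket_self_eq0 => k.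
by rewrite lam_u subrr.
Qed.

(* [overlap_deriv] is the derivative of ⟨u_j|w_k⟩ = √p_j δ_jk: it is real,
   diagonal, and vanishes where p_j is identically zero. *)
Variables (dW : 'I_D -> 'cV[Cplx]_D) (r : 'I_D -> R).
Hypothesis W_orthonormal : forall j k, braket (W j) (W k) = (j == k)%:R.
Hypothesis dW_skew : forall j k, braket (dW j) (W k) + braket (W j) (dW k) = 0.
Hypothesis overlap_deriv : forall j k,
  braket (v j) (W k) + braket (u j) (dW k) = (j == k)%:R * cR (r j).
Hypothesis r_null : forall j, p j = 0 -> r j = 0.

Lemma braket_W_dW j k : braket (W j) (dW k) = - braket (dW j) (W k).
Proof. by apply/eqP; rewrite -addr_eq0 addrC dW_skew. Qed.

Lemma braket_v_W j k :
  braket (v j) (W k) = (j == k)%:R * cR (r j) + sq j * braket (dW j) (W k).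
Proof. by rewrite -overlap_deriv braketZl conj_cR braket_W_dW; ring. Qed.

Lemma braket_v_u_skew j k :
  braket (v j) (u k) - braket (u j) (v k) = 2%:R * sq j * sq k * braket (dW j) (W k).
Proof.
rewrite braketZr braketZl conj_cR -[braket (W j) _]braketJ !braket_v_W.
rewrite rmorphD !rmorphM /= !conj_cR rmorph_nat braketJ braket_W_dW.
by case: (eqVneq j k) => [<-|_] /=; ring.
Qed.

Lemma v_null k : p k = 0 -> v k = 0.
Proof.
move=> pk0; apply: (orthonormal_eq0 W_orthonormal) => j.
by rewrite -braketJ braket_v_W r_null // pk0 sqrtr0 cR0 !mul0r mulr0 addr0 rmorph0.
Qed.

Lemma braket_W_rho j x : braket (W j) (rho *m x) = cR (p j) * braket (W j) x.
Proof.
rewrite mulmx_suml braket_sumr (bigD1 j) //= big1 => [|m ne_mj].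
  by rewrite -scalemxAl braketZr /ketbra braket_ketbra W_orthonormal eqxx mul1r addr0.
rewrite -scalemxAl braketZr /ketbra braket_ketbra W_orthonormal eq_sym (negPf ne_mj).
by rewrite !mul0r mulr0.
Qed.

Lemma rho_u k : rho *m u k = cR (p k) *: u k.
Proof.
apply/eqP; rewrite -subr_eq0; apply/eqP/(orthonormal_eq0 W_orthonormal) => j.
rewrite braketBr braket_W_rho !braketZr W_orthonormal.
by case: (eqVneq j k) => [->|_] /=; ring.
Qed.

Lemma braket_W_drho_SLD j k :
  2%:R * braket (W j) (drho *m u k) = (cR (p j) + cR (p k)) * braket (W j) (lam *m u k).
Proof.
case: lam_SLD => _ ->; rewrite -scalemxAl braketZr mulmxDl braketDr -!mulmxA.
rewrite braket_W_rho rho_u -(scalemxAr (cR (p k))) braketZr.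
by field.
Qed.

Lemma braket_W_drho_sum j k :
  braket (W j) (drho *m u k) = cR (p k) * braket (W j) (v k) + sq j * braket (v j) (u k).
Proof.
have uu m : braket (u m) (u k) = (m == k)%:R * cR (p k).
  rewrite braketZl braketZr conj_cR W_orthonormal -(cR_sqrt (p_ge0 k)).
  by case: (eqVneq m k) => [->|_] /=; ring.
have Wu m : braket (W j) (u m) = (m == j)%:R * sq j.
  by rewrite braketZr W_orthonormal eq_sym; case: (eqVneq m j) => [->|_] /=; ring.
rewrite drho_sum mulmx_suml braket_sumr.
under eq_bigr do rewrite mulmxDl braketDr !braket_ketbra uu Wu.
rewrite big_split /= (bigD1 k) // [X in _ + X](bigD1 j) //= !big1
  => [|m /negPf->|m /negPf->].
- by rewrite !eqxx /=; ring.
- by rewrite !mul0r.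
- by rewrite mul0r mulr0.
Qed.

Lemma SLD_info_saturated_iff :
  (forall k, lam *m u k = 2%:R *: v k) <->
  (forall j k, 0 < p j -> 0 < p k -> braket (dW j) (W k) = 0).
Proof.
have sq_neq0 k : 0 < p k -> sq k != 0 by move=> pk_gt0; rewrite cR_eq0 gt_eqF ?sqrtr_gt0.
have two_neq0 : 2%:R != 0 :> Cplx by rewrite pnatr_eq0.
case: lam_SLD => lam_herm _; split=> [lam_u j k pj_gt0 pk_gt0 | dW_W k].
  have vu_sym : braket (v j) (u k) = braket (u j) (v k).
    have := braket_mulmxr (u j) (u k) lam.
    rewrite lam_herm !lam_u (braketZl (v j)) (braketZr (u j)) rmorph_nat.
    by move=> /(mulfI two_neq0).
  move: (braket_v_u_skew j k); rewrite vu_sym subrr => /esym/eqP.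
  by rewrite !mulf_eq0 (negPf two_neq0) !(negPf (sq_neq0 _ _)) //= => /eqP.
have p_cases m : p m = 0 \/ 0 < p m.
  by move: (p_ge0 m); rewrite le0r => /orP[/eqP|]; [left|right].
have [pk0|pk_gt0] := p_cases k.
  by rewrite (v_null pk0) pk0 sqrtr0 cR0 scale0r mulmx0 scaler0.
apply/eqP; rewrite -subr_eq0; apply/eqP/(orthonormal_eq0 W_orthonormal) => j.
have pj_dW : cR (p j) * braket (dW j) (W k) = 0.
  by case: (p_cases j) => [->|pj_gt0]; rewrite ?cR0 ?mul0r // dW_W ?mulr0.
have sq_vu : sq j * braket (v j) (u k) = cR (p j) * braket (W j) (v k).
  move/eqP: (braket_v_u_skew j k); rewrite subr_eq braketZl conj_cR => /eqP->.
  rewrite -(cR_sqrt (p_ge0 j)) in pj_dW *.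
  transitivity (2%:R * sq k * (sq j * sq j * braket (dW j) (W k))
                + sq j * sq j * braket (W j) (v k)); first by ring.
  by rewrite pj_dW mulr0 add0r.
have p_sum_neq0 : cR (p j) + cR (p k) != 0.
  by rewrite cRD cR_eq0 gt_eqF // ltr_wpDl.
apply: (mulfI p_sum_neq0); rewrite mulr0 braketBr braketZr mulrBr.
by rewrite -braket_W_drho_SLD braket_W_drho_sum sq_vu; ring.
Qed.

End SLDInformationBound.

Section ChannelDerivatives.
Variables (D : nat) (Th : R -> Prop) (psi0 : 'cV[Cplx]_D).
Variables (U dU : 'I_D -> R -> 'M[Cplx]_D) (p : 'I_D -> R -> R).
Variables (w dw : 'I_D -> R -> 'cV[Cplx]_D) (drho : R -> 'M[Cplx]_D).
Hypothesis Th_open : Theta_open_interval Th.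
Hypothesis dU_deriv : forall k t, Th t -> mderiv_at (U k) (dU k t) t.
Hypothesis dw_deriv : forall k t, Th t -> mderiv_at (w k) (dw k t) t.
Hypothesis U_psi0 : forall t k, Th t -> U k t *m psi0 = cR (Num.sqrt (p k t)) *: w k t.
Hypothesis w_orthonormal : forall t j k, Th t -> braket (w j t) (w k t) = (j == k)%:R.
Hypothesis p_null_or_pos :
  forall k, (forall t, Th t -> p k t = 0) \/ (forall t, Th t -> 0 < p k t).
Hypothesis drho_deriv : forall t, Th t ->
  mderiv_at (fun s => \sum_k cR (p k s) *: ketbra (w k s) (w k s)) (drho t) t.

Lemma p_ge0 t k : Th t -> 0 <= p k t.
Proof. by move=> Th_t; case: (p_null_or_pos k) => p_k; rewrite ?p_k // ltW ?p_k. Qed.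

Variables (t : R).
Hypothesis Th_t : Th t.

Local Notation u k := (cR (Num.sqrt (p k t)) *: w k t).
Local Notation v k := (dU k t *m psi0).
Local Notation overlap j k := (braket (v j) (w k t) + braket (U j t *m psi0) (dw k t)).

Lemma drho_sum_ketbra : drho t = \sum_k (v k *m adj (u k) + u k *m adj (v k)).
Proof.
have dUpsi0 k : mderiv_at (fun s => U k s *m psi0) (v k) t.
  exact: mderiv_mulmxr (dU_deriv k Th_t).
rewrite (mderiv_sum_ketbra Th_open Th_t dUpsi0 _ (drho_deriv Th_t)).
  by apply: eq_bigr => k _; rewrite U_psi0.
move=> s Th_s; rewrite (rho_sum_ketbra (w^~ s) (fun k => p_ge0 k Th_s)).
by apply: eq_bigr => k _; rewrite U_psi0.
Qed.

Lemma dw_skew j k : braket (dw j t) (w k t) + braket (w j t) (dw k t) = 0.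
Proof.
have dww := cderiv_braket (dw_deriv j Th_t) (dw_deriv k Th_t).
by apply: (cderiv_loc_const Th_open Th_t _ dww) => s; apply: w_orthonormal.
Qed.

Lemma overlap_cderiv j k :
  cderiv_at (fun s => braket (U j s *m psi0) (w k s)) (overlap j k) t.
Proof. exact: cderiv_braket (mderiv_mulmxr psi0 (dU_deriv j Th_t)) (dw_deriv k Th_t). Qed.

Lemma braket_U_psi0_w s j k : Th s ->
  braket (U j s *m psi0) (w k s) = (j == k)%:R * cR (Num.sqrt (p j s)).
Proof. by move=> Th_s; rewrite U_psi0 // braketZl conj_cR w_orthonormal // mulrC. Qed.

Lemma overlap_diag j k :
  braket (v j) (w k t) + braket (u j) (dw k t) =
  (j == k)%:R * cR (complex.Re (overlap j j)).
Proof.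
rewrite -U_psi0 //; case: (eqVneq j k) => [<-|ne_jk]; rewrite /= ?mul1r ?mul0r.
  apply: (cderiv_loc_real Th_open Th_t _ (overlap_cderiv j j)) => s Th_s.
  by rewrite braket_U_psi0_w // eqxx mul1r.
apply: (cderiv_loc_const Th_open Th_t _ (overlap_cderiv j k)) => s Th_s.
by rewrite braket_U_psi0_w // (negPf ne_jk) mul0r.
Qed.

Lemma overlap_null j : p j t = 0 -> complex.Re (overlap j j) = 0.
Proof.
move=> pj0; have p_j : forall s, Th s -> p j s = 0.
  by case: (p_null_or_pos j) => // p_pos; move: (p_pos t Th_t); rewrite pj0 ltxx.
rewrite (@cderiv_loc_const _ _ Th_open Th_t _ 0 _ _ (overlap_cderiv j j)) // => s Th_s.
by rewrite braket_U_psi0_w // p_j // sqrtr0 cR0 mulr0.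
Qed.

End ChannelDerivatives.

Theorem theorem2p3
  (D : nat) (HD : (0 < D)%N)
  (Th : R -> Prop) (HTh : Theta_open_interval Th)
  (psi0 : 'cV[Cplx]_D) (Hpsi0 : braket psi0 psi0 = 1)
  (U dU : 'I_D -> R -> 'M[Cplx]_D)
  (p : 'I_D -> R -> R)
  (w dw : 'I_D -> R -> 'cV[Cplx]_D)
  (HdU : forall k t, Th t -> mderiv_at (U k) (dU k t) t)
  (Hdw : forall k t, Th t -> mderiv_at (w k) (dw k t) t)
  (Hcomplete : forall t, Th t -> \sum_(k < D) adj (U k t) *m U k t = 1%:M)
  (Hcanon : forall t j k, Th t ->
     \tr (U k t *m ketbra psi0 psi0 *m adj (U j t)) = ((j == k)%:R * cR (p k t)))
  (Hw : forall t k, Th t -> U k t *m psi0 = cR (Num.sqrt (p k t)) *: w k t)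
  (Horth : forall t j k, Th t -> braket (w j t) (w k t) = (j == k)%:R)
  (Hp : forall k, (forall t, Th t -> p k t = 0) \/ (forall t, Th t -> 0 < p k t))
  (drho : R -> 'M[Cplx]_D)
  (Hdrho : forall t, Th t ->
     mderiv_at (fun s => \sum_(k < D) cR (p k s) *: ketbra (w k s) (w k s))
               (drho t) t) :
  forall t, Th t ->
  forall lam : 'M[Cplx]_D,
    is_SLD (\sum_(k < D) cR (p k t) *: ketbra (w k t) (w k t)) (drho t) lam ->
    let H := SLD_info (\sum_(k < D) cR (p k t) *: ketbra (w k t) (w k t)) lam in
    let CU := 4 * \sum_(k < D) \tr (dU k t *m ketbra psi0 psi0 *m adj (dU k t)) in
    H <= CU /\
    (H = CU <-> forall j k, 0 < p j t -> 0 < p k t -> braket (dw j t) (w k t) = 0).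
Proof.
move=> t Th_t lam lam_SLD H CU.
have p_ge0_t k : 0 <= p k t := p_ge0 Hp k Th_t.
have drho_sum := drho_sum_ketbra HTh HdU Hw Hp Hdrho Th_t.
have [info_le info_eq] := SLD_info_bound p_ge0_t lam_SLD drho_sum.
have CU_sum : CU = 4 * \sum_k braket (dU k t *m psi0) (dU k t *m psi0).
  by rewrite /CU; under eq_bigr do rewrite mxtrace_conj_ketbra.
rewrite /H CU_sum; split=> //; rewrite info_eq.
exact: (SLD_info_saturated_iff p_ge0_t lam_SLD drho_sum (fun j k => Horth t j k Th_t)
  (dw_skew HTh Hdw Horth Th_t) (overlap_diag HTh HdU Hdw Hw Horth Th_t)
  (overlap_null HTh HdU Hdw Hw Horth Hp Th_t)).
Qed.
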